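(* For $0<p<1$: (1) $C_{\{1,2\}}(p)<1.2183+1.6066\,\dfrac{p}{1-p}$; (2) for $J_{sym}=\{2\}\cup\{2m+1: m\geqslant 0\}$, $C_{J_{sym}}(p)<0.5893+0.9724\,\dfrac{p}{1-p}+0.1405\,\dfrac{p^2}{(1-p^2)^2}$. Moreover, for $n=2,3,\dots,10$ one has $C_{\{1,2\}}(1/n)\leqslant c_n$ and $C_{J_{sym}}(1/n)\leqslant d_n$ where $(c_2,\dots,c_{10})=(2.1327,1.6582,1.5043,1.4293,1.3851,1.3560,1.3354,1.3202,1.3085)$ and $(d_2,\dots,d_{10})=(1.0570,0.8168,0.7387,0.7001,0.6773,0.6622,0.6515,0.6436,0.6374)$.
   Context: $\mathbb{Z}^+$ denotes the set of positive integers. For $J\subset\mathbb{Z}^+$, $s\in\mathbb{Z}^+$ and $0<p<1$, \[ h_J(s,p)=\frac{(1-p)^s}{p^2}\sum_{k\in\mathbb{Z}^+\setminus J}\frac{k^2}{(k+s)^2}\binom{k+s}{k}p^k,\qquad C_J(p)=\max_{s\in\mathbb{Z}^+}h_J(s,p). \] *)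

From Stdlib Require Import Reals Arith.
From Coquelicot Require Import Coquelicot.
Open Scope R_scope.

(* A subset J of Z^+ is represented by a boolean predicate on nat
   (values at 0 are irrelevant, since k ranges over Z^+ only). *)

Definition hterm (J : nat -> bool) (s : nat) (p : R) (k : nat) : R :=
  if ((1 <=? k)%nat && negb (J k))%bool then
    (INR k)^2 / (INR (k + s))^2 * Binomial.C (k + s) k * p ^ k
  else 0.

Definition h (J : nat -> bool) (s : nat) (p : R) : R :=
  (1 - p) ^ s / p ^ 2 * Series (hterm J s p).

(* C_J(p) = max_{s in Z^+} h_J(s,p), formalized as the supremum
   (in extended reals) of h_J(s,p) over s >= 1. *)
Definition CJ (J : nat -> bool) (p : R) : Rbar :=
  Lub_Rbar (fun x => exists s : nat, (1 <= s)%nat /\ x = h J s p).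

Definition J12 (k : nat) : bool := ((k =? 1)%nat || (k =? 2)%nat)%bool.

Definition Jsym (k : nat) : bool := ((k =? 2)%nat || Nat.odd k)%bool.

Definition cval (n : nat) : R :=
  match n with
  | 2 => 21327/10000 | 3 => 16582/10000 | 4 => 15043/10000
  | 5 => 14293/10000 | 6 => 13851/10000 | 7 => 13560/10000
  | 8 => 13354/10000 | 9 => 13202/10000 | 10 => 13085/10000
  | _ => 0 end.

Definition dval (n : nat) : R :=
  match n with
  | 2 => 10570/10000 | 3 => 8168/10000 | 4 => 7387/10000
  | 5 => 7001/10000 | 6 => 6773/10000 | 7 => 6622/10000
  | 8 => 6515/10000 | 9 => 6436/10000 | 10 => 6374/10000
  | _ => 0 end.

From Stdlib Require Import Reals Lia Lra List ZArith QArith Qreals Qround.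
From Coquelicot Require Import Coquelicot.
Import ListNotations.
Open Scope R_scope.

(* For k >= 2 the k-th summand of h_J(s,p) is at most
     p^2 C(k+s-2, k-2) p^(k-2) + (p/s) C(k+s-2, k-1) p^(k-1),
   and summing these negative binomial series over k outside J bounds h_J(s,p)
   in closed form by powers of 1-p (and of 1+p for J_sym, through the even and
   odd parts of the series).  Put t = p/(1-p) and u = s t >= t.  Since
   (1-p)^s >= e^-u, the affine bounds in t follow, after multiplying by u, from
   their values at the endpoints t = 0 and t = u, which are inequalities between
   polynomials in u and e^-u; these are certified on a dyadic grid in exact
   rational arithmetic.  For p = 1/n, h_J(s,p) is evaluated for small s in
   fixed-point integer arithmetic rounded upwards, its tail being dominated by a
   geometric series; for large s the closed form is already small enough. *)

(** * Negative binomial series *)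

(* [nbinom m j] is C(j+m, j), the coefficient of x^j in (1-x)^-(m+1); the
   product form is the one iterated by the exact evaluation at p = 1/n. *)
Fixpoint nbinom (m j : nat) : R :=
  match j with
  | O => 1
  | S j' => nbinom m j' * INR (S j' + m) / INR (S j')
  end.

Lemma nbinom_S m j : nbinom m (S j) = nbinom m j * INR (S j + m) / INR (S j).
Proof. reflexivity. Qed.

Lemma nbinom_pos m j : 0 < nbinom m j.
Proof.
  induction j as [|j IH]; [simpl; lra|]. rewrite nbinom_S.
  apply Rdiv_lt_0_compat; [apply Rmult_lt_0_compat; [exact IH|]|]; apply lt_0_INR; lia.
Qed.

Lemma binomial_C_nbinom s k : Binomial.C (k + s) k = nbinom s k.
Proof.
  unfold Binomial.C. replace (k + s - k)%nat with s by lia.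
  pose proof (INR_fact_neq_0 s) as Hs.
  induction k as [|k IH]; cbn [nbinom].
  - rewrite Nat.add_0_l. simpl (fact 0). rewrite INR_1. field. exact Hs.
  - rewrite <- IH. replace (S k + s)%nat with (S (k + s)) by lia.
    rewrite !fact_simpl, !mult_INR.
    pose proof (INR_fact_neq_0 k). pose proof (not_0_INR (S k) ltac:(lia)).
    field. auto.
Qed.

Lemma nbinom_0_l j : nbinom 0 j = 1.
Proof.
  induction j as [|j IH]; cbn [nbinom]; [reflexivity|].
  rewrite IH, Nat.add_0_r. field. apply not_0_INR; lia.
Qed.

Lemma nbinom_S_l m n : nbinom (S m) n = nbinom m n * INR (n + S m) / INR (S m).
Proof.
  induction n as [|n IH]; cbn [nbinom].
  - rewrite Nat.add_0_l. field. apply not_0_INR; lia.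
  - rewrite IH.
    replace (S n + S m)%nat with (S (S (n + m))) by lia.
    replace (n + S m)%nat with (S (n + m)) by lia.
    replace (S n + m)%nat with (S (n + m)) by lia.
    rewrite !S_INR. pose proof (pos_INR n). pose proof (pos_INR m).
    field. lra.
Qed.

Lemma nbinom_pascal m n : nbinom (S m) (S n) = nbinom (S m) n + nbinom m (S n).
Proof.
  rewrite !nbinom_S_l. cbn [nbinom].
  replace (S n + S m)%nat with (S (S (n + m))) by lia.
  replace (n + S m)%nat with (S (n + m)) by lia.
  replace (S n + m)%nat with (S (n + m)) by lia.
  rewrite !S_INR, plus_INR. pose proof (pos_INR n). pose proof (pos_INR m).
  field. lra.
Qed.

Lemma nbinom_hockey_stick m n : nbinom (S m) n = sum_f_R0 (nbinom m) n.
Proof.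
  induction n as [|n IH]; [reflexivity|].
  rewrite nbinom_pascal, IH. reflexivity.
Qed.

(* By induction on m: multiplying by the geometric series turns the
   coefficients into their partial sums (hockey stick). *)
Lemma is_series_nbinom m x : Rabs x < 1 ->
  is_series (fun j => nbinom m j * x ^ j) (/ (1 - x) ^ S m).
Proof.
  revert x. induction m as [|m IH]; intros x Hx.
  - rewrite pow_1.
    apply (is_series_ext (fun n => x ^ n)); [|exact (is_series_geom x Hx)].
    intros n. now rewrite nbinom_0_l, Rmult_1_l.
  - assert (Hx1 : 0 < 1 - x) by (apply Rabs_def2 in Hx; lra).
    assert (Hax : Rabs (Rabs x) < 1) by (rewrite Rabs_Rabsolu; exact Hx).
    assert (Habs : forall k, Rabs (nbinom m k * x ^ k) = nbinom m k * Rabs x ^ k).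
    { intros k. rewrite Rabs_mult, Rabs_right, RPow_abs; [reflexivity|].
      left; apply nbinom_pos. }
    replace (/ (1 - x) ^ S (S m)) with (/ (1 - x) ^ S m * / (1 - x))
      by (simpl; field; split; try apply pow_nonzero; lra).
    refine (is_series_ext _ _ _ _
      (is_series_mult _ (fun j => x ^ j) _ _ (IH x Hx) (is_series_geom x Hx) _ _)).
    + intros n. rewrite nbinom_hockey_stick, Rmult_comm, scal_sum.
      apply sum_eq. intros i Hi.
      rewrite Rmult_assoc, <- pow_add. do 2 f_equal. lia.
    + eapply ex_series_ext; [intros k; symmetry; apply Habs|].
      eexists; apply (IH _ Hax).
    + eapply ex_series_ext; [intros k; rewrite RPow_abs; reflexivity|].
      eexists; apply is_series_geom; exact Hax.
Qed.

Lemma pow_opp_parity x j : (- x) ^ j = if Nat.odd j then - x ^ j else x ^ j.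
Proof.
  induction j as [|j IH]; [reflexivity|].
  simpl pow. rewrite IH, Nat.odd_succ, <- Nat.negb_odd.
  destruct (Nat.odd j); simpl; ring.
Qed.

Lemma is_series_even_part (c : nat -> R) x (A B : R) :
  is_series (fun j => c j * x ^ j) A -> is_series (fun j => c j * (- x) ^ j) B ->
  is_series (fun j => if Nat.odd j then 0 else c j * x ^ j) ((A + B) / 2).
Proof.
  intros HA HB.
  replace ((A + B) / 2) with (scal (/ 2) (plus A B))
    by (unfold scal, plus; simpl; unfold mult; simpl; field).
  refine (is_series_ext _ _ _ _ (is_series_scal (/ 2) _ _ (is_series_plus _ _ _ _ HA HB))).
  intros n. unfold scal, plus; simpl. unfold mult; simpl.
  rewrite pow_opp_parity. destruct (Nat.odd n); field.
Qed.

Lemma is_series_odd_part (c : nat -> R) x (A B : R) :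
  is_series (fun j => c j * x ^ j) A -> is_series (fun j => c j * (- x) ^ j) B ->
  is_series (fun j => if Nat.odd j then c j * x ^ j else 0) ((A - B) / 2).
Proof.
  intros HA HB.
  replace ((A - B) / 2) with (scal (/ 2) (minus A B))
    by (unfold scal, minus, plus, opp; simpl; unfold mult; simpl; field).
  refine (is_series_ext _ _ _ _ (is_series_scal (/ 2) _ _ (is_series_minus _ _ _ _ HA HB))).
  intros n. unfold scal, minus, plus, opp; simpl. unfold mult; simpl.
  rewrite pow_opp_parity. destruct (Nat.odd n); field.
Qed.

Lemma is_series_shift (a : nat -> R) (l : R) :
  is_series a l -> is_series (fun j => a (S j)) (l - a O).
Proof.
  intros Ha. apply is_series_incr_1. unfold plus; simpl.
  replace (l - a O + a O) with l by ring. exact Ha.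
Qed.

Lemma is_series_drop_first (a : nat -> R) (l : R) :
  is_series a l -> is_series (fun j => if (j =? 0)%nat then 0 else a j) (l - a O).
Proof.
  intros Ha. apply is_series_decr_1. simpl. unfold plus, opp; simpl.
  rewrite Ropp_0, Rplus_0_r. exact (is_series_shift _ _ Ha).
Qed.

(** * Closed-form bounds for h_J *)

Lemma hterm_nonneg J s p k : 0 < p -> 0 <= hterm J s p k.
Proof.
  intros Hp. unfold hterm. destruct (_ && _)%bool eqn:Hk; [|lra].
  apply andb_true_iff in Hk as [Hk _]. apply Nat.leb_le in Hk.
  rewrite binomial_C_nbinom.
  pose proof (nbinom_pos s k). pose proof (pow_lt p k Hp).
  assert (0 < INR (k + s)) by (apply lt_0_INR; lia).
  apply Rmult_le_pos; [apply Rmult_le_pos|]; try lra.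
  apply Rdiv_le_0_compat; [apply pow2_ge_0 | apply pow_lt; lra].
Qed.

Lemma hterm_SS J s p j : hterm J s p (S (S j)) =
  if J (S (S j)) then 0
  else INR (S (S j)) ^ 2 / INR (S (S j) + s) ^ 2 * nbinom s (S (S j)) * p ^ S (S j).
Proof. unfold hterm. rewrite binomial_C_nbinom. now destruct (J _). Qed.

Lemma nbinom_summand_split m j p : 0 < p ->
  INR (S (S j)) ^ 2 / INR (S (S j) + S m) ^ 2 * nbinom (S m) (S (S j)) * p ^ S (S j)
  <= p ^ 2 * (nbinom (S m) j * p ^ j) + p / INR (S m) * (nbinom m (S j) * p ^ S j).
Proof.
  intros Hp.
  rewrite !nbinom_S, nbinom_S_l.
  pose proof (nbinom_pos m j) as HX. pose proof (pow_lt p j Hp) as HP.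
  set (X := nbinom m j) in *. set (P := p ^ j) in *.
  replace (p ^ S (S j)) with (p ^ 2 * P) by (unfold P; simpl; ring).
  replace (p ^ S j) with (p * P) by (unfold P; simpl; ring).
  replace (S (S j) + S m)%nat with (S (S (S (j + m)))) by lia.
  replace (S j + S m)%nat with (S (S (j + m))) by lia.
  replace (j + S m)%nat with (S (j + m)) by lia.
  replace (S j + m)%nat with (S (j + m)) by lia.
  rewrite !S_INR, !plus_INR.
  pose proof (pos_INR j) as Ha. pose proof (pos_INR m) as Hb.
  set (a := INR j) in *. set (b := INR m) in *.
  assert (Hp2 : 0 < p ^ 2) by (apply pow_lt; lra).
  match goal with |- ?L <= ?R =>
    assert (Hdiff : R - L = P * p ^ 2 * X * (a + b + 1) * (a + 2) / ((b + 1) * (a + 1) * (a + b + 3)))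
      by (field; repeat split; lra)
  end.
  assert (0 <= P * p ^ 2 * X * (a + b + 1) * (a + 2) / ((b + 1) * (a + 1) * (a + b + 3))).
  { apply Rdiv_le_0_compat; [|apply Rmult_lt_0_compat; [apply Rmult_lt_0_compat|]; lra].
    repeat apply Rmult_le_pos; lra. }
  lra.
Qed.

Lemma h_le_split_series J m p (alpha beta : R) : 0 < p < 1 -> J 1%nat = true ->
  is_series (fun j => if J (S (S j)) then 0 else nbinom (S m) j * p ^ j) alpha ->
  is_series (fun j => if J (S (S j)) then 0 else nbinom m (S j) * p ^ S j) beta ->
  h J (S m) p <= (1 - p) ^ S m / p ^ 2 * (p ^ 2 * alpha + p / INR (S m) * beta).
Proof.
  intros Hp HJ1 Ha Hb. unfold h.
  apply Rmult_le_compat_l.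
  { apply Rdiv_le_0_compat; [apply pow_le; lra | apply pow_lt; lra]. }
  set (g := fun j => p ^ 2 * (if J (S (S j)) then 0 else nbinom (S m) j * p ^ j)
                 + p / INR (S m) * (if J (S (S j)) then 0 else nbinom m (S j) * p ^ S j)).
  assert (Hg : is_series g (p ^ 2 * alpha + p / INR (S m) * beta))
    by exact (is_series_plus _ _ _ _ (is_series_scal _ _ _ Ha) (is_series_scal _ _ _ Hb)).
  rewrite (Series_incr_n_aux _ 2), <- (is_series_unique _ _ Hg).
  - apply Series_le; [|eexists; exact Hg].
    intros j. split; [apply hterm_nonneg; lra|].
    change (2 + j)%nat with (S (S j)). rewrite hterm_SS. unfold g.
    destruct (J (S (S j))); [lra|]. apply nbinom_summand_split; lra.
  - intros [|[|k]] Hk; [reflexivity| |lia]. unfold hterm. simpl. now rewrite HJ1.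
Qed.

Lemma h_J12_le s p : (1 <= s)%nat -> 0 < p < 1 ->
  h J12 s p <= 1 / (1 - p) + (1 - (1 - p) ^ s) / (INR s * p) - 2 * (1 - p) ^ s.
Proof.
  intros Hs Hp. destruct s as [|m]; [lia|].
  assert (Hx : Rabs p < 1) by (rewrite Rabs_right; lra).
  pose proof (is_series_drop_first _ _ (is_series_nbinom (S m) p Hx)) as Ha.
  pose proof (is_series_drop_first _ _ (is_series_shift _ _ (is_series_nbinom m p Hx))) as Hb.
  eapply Rle_trans; [exact (h_le_split_series J12 m p _ _ Hp eq_refl Ha Hb)|].
  right. cbv beta. rewrite nbinom_S. cbn [nbinom pow].
  replace (1 + m)%nat with (S m) by lia. change (INR 1) with 1.
  pose proof (pos_INR m). pose proof (pow_lt (1 - p) m ltac:(lra)).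
  rewrite S_INR. simpl pow. field. repeat split; lra.
Qed.

Lemma h_Jsym_le s p : (1 <= s)%nat -> 0 < p < 1 ->
  h Jsym s p <= 1 / (2 * (1 - p)) + 1 / (2 * INR s * p)
    + (1 - p) ^ s / (1 + p) ^ s * (1 / (2 * (1 + p)) - 1 / (2 * INR s * p))
    - 2 * (1 - p) ^ s.
Proof.
  intros Hs Hp. destruct s as [|m]; [lia|].
  assert (Hx : Rabs p < 1) by (rewrite Rabs_right; lra).
  assert (Hx' : Rabs (- p) < 1) by (rewrite Rabs_Ropp, Rabs_right; lra).
  pose proof (is_series_drop_first _ _ (is_series_even_part _ _ _ _
    (is_series_nbinom (S m) p Hx) (is_series_nbinom (S m) (- p) Hx'))) as Ha.
  pose proof (is_series_drop_first _ _ (is_series_shift _ _ (is_series_odd_part _ _ _ _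
    (is_series_nbinom m p Hx) (is_series_nbinom m (- p) Hx')))) as Hb.
  apply (is_series_ext _ (fun j => if Jsym (S (S j)) then 0 else nbinom (S m) j * p ^ j))
    in Ha.
  2:{ intros [|j]; [reflexivity|]. change (Jsym (S (S (S j)))) with (Nat.odd (S j)).
      now destruct (Nat.odd (S j)). }
  apply (is_series_ext _ (fun j => if Jsym (S (S j)) then 0 else nbinom m (S j) * p ^ S j))
    in Hb.
  2:{ intros [|j]; [reflexivity|]. change (Jsym (S (S (S j)))) with (Nat.odd (S j)).
      rewrite (Nat.odd_succ (S j)), <- Nat.negb_odd. now destruct (Nat.odd (S j)). }
  eapply Rle_trans; [exact (h_le_split_series Jsym m p _ _ Hp eq_refl Ha Hb)|].
  right. change (Nat.odd 0) with false. change (Nat.odd 1) with true.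
  replace (1 - - p) with (1 + p) by ring. rewrite nbinom_S. cbn [nbinom pow].
  replace (1 + m)%nat with (S m) by lia. change (INR 1) with 1.
  pose proof (pos_INR m). pose proof (pow_lt (1 - p) m ltac:(lra)).
  pose proof (pow_lt (1 + p) m ltac:(lra)).
  rewrite S_INR. simpl pow. field. repeat split; lra.
Qed.

(** * Certified inequalities between polynomials in u and e^-u *)

Lemma one_add_pow_le_exp x n : 0 <= 1 + x -> (1 + x) ^ n <= exp (INR n * x).
Proof.
  intros Hx. induction n as [|n IH].
  - simpl. rewrite Rmult_0_l, exp_0. lra.
  - rewrite S_INR, Rmult_plus_distr_r, Rmult_1_l, exp_plus. simpl pow.
    rewrite Rmult_comm. apply Rmult_le_compat; [apply pow_le; lra | lra | exact IH | apply exp_ineq1_le].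
Qed.

Lemma exp_le_pow_one_sub s p : 0 < p < 1 -> exp (- (INR s * (p / (1 - p)))) <= (1 - p) ^ s.
Proof.
  intros Hp. set (t := p / (1 - p)).
  assert (Ht : 0 <= t) by (apply Rdiv_le_0_compat; lra).
  replace (1 - p) with (/ (1 + t)) by (unfold t; field; lra).
  rewrite pow_inv, exp_Ropp.
  apply Rinv_le_contravar; [apply pow_lt; lra | apply one_add_pow_le_exp; lra].
Qed.

Lemma exp_le_exp x y : x <= y -> exp x <= exp y.
Proof.
  intros H. destruct (Rle_lt_or_eq_dec x y H) as [Hlt|Heq];
    [left; apply exp_increasing, Hlt | rewrite Heq; right; reflexivity].
Qed.

Lemma exp_sub_one_le x : exp x - 1 <= x * exp x.
Proof.
  pose proof (exp_ineq1_le (- x)) as H. rewrite exp_Ropp in H.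
  pose proof (exp_pos x).
  apply Rmult_le_compat_r with (r := exp x) in H; [|lra].
  rewrite Rinv_l in H by lra. nra.
Qed.

Lemma twice_le_exp x : 0 <= x -> 2 * x <= exp x.
Proof.
  intros Hx. replace x with (x / 2 + x / 2) at 2 by field. rewrite exp_plus.
  pose proof (exp_ineq1_le (x / 2)).
  assert ((1 + x / 2) * (1 + x / 2) <= exp (x / 2) * exp (x / 2))
    by (apply Rmult_le_compat; lra).
  pose proof (Rle_0_sqr (1 - x / 2)). unfold Rsqr in *. nra.
Qed.

Lemma pow_one_sub_le_1 p s : 0 <= p <= 1 -> (1 - p) ^ s <= 1.
Proof. intros Hp. rewrite <- (pow1 s) at 2. apply pow_incr. split; lra. Qed.

Lemma Rinv_le_1 x : 1 <= x -> / x <= 1.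
Proof. intros H. apply Rmult_le_reg_l with x; [lra|]. rewrite Rinv_r by lra. lra. Qed.

Lemma exp_neg_le_1 u : 0 <= u -> exp (- u) <= 1.
Proof. intros Hu. rewrite <- exp_0. apply exp_le_exp. lra. Qed.

Definition rdown_den : positive := 4294967296.

Definition rdown (x : Q) : Q := Qmake (Qfloor (x * inject_Z (Zpos rdown_den))) rdown_den.

Lemma Q2R_inject_Z z : Q2R (inject_Z z) = IZR z.
Proof. unfold Q2R, inject_Z. simpl. field. Qed.

Lemma Q2R_Qmake z d : Q2R (Qmake z d) = IZR z / IZR (Zpos d).
Proof. reflexivity. Qed.

Lemma Q2R_rdown_le x : Q2R (rdown x) <= Q2R x.
Proof.
  unfold rdown. rewrite Q2R_Qmake.
  pose proof (Qle_Rle _ _ (Qfloor_le (x * inject_Z (Zpos rdown_den)))) as H.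
  rewrite Q2R_inject_Z, Q2R_mult, Q2R_inject_Z in H.
  assert (0 < IZR (Zpos rdown_den)) by (apply IZR_lt; reflexivity).
  apply Rmult_le_reg_r with (IZR (Zpos rdown_den)); [lra|].
  unfold Rdiv. rewrite Rmult_assoc, Rinv_l by lra. lra.
Qed.

Lemma Q2R_rdown_nonneg x : 0 <= Q2R x -> 0 <= Q2R (rdown x).
Proof.
  intros H. unfold rdown. rewrite Q2R_Qmake.
  apply Rdiv_le_0_compat; [|apply IZR_lt; reflexivity].
  apply IZR_le. change 0%Z with (Qfloor 0). apply Qfloor_resp_le.
  apply Rle_Qle. rewrite Q2R_mult, Q2R_inject_Z, RMicromega.Q2R_0.
  apply Rmult_le_pos; [exact H | apply IZR_le; discriminate].
Qed.

Fixpoint horner (l : list R) (v : R) : R :=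
  match l with nil => 0 | c :: l' => c + v * horner l' v end.

Definition Qmin0 (x : Q) : Q := if Qle_bool 0 x then 0 else x.

(* A lower bound for [horner l] on [0, w]: the tail [v * q(v)] is at least
   [min 0 (w * lb q)]. *)
Fixpoint horner_lb (l : list Q) (w : Q) : Q :=
  match l with nil => 0 | c :: l' => c + Qmin0 (w * horner_lb l' w) end.

Lemma Qmin0_mul_le v w x : 0 <= v <= Q2R w -> Q2R (Qmin0 (w * x)) <= v * Q2R x.
Proof.
  intros Hv. unfold Qmin0. destruct (Qle_bool 0 (w * x)) eqn:E.
  - apply Qle_bool_iff, Qle_Rle in E. rewrite Q2R_mult, RMicromega.Q2R_0 in E.
    rewrite RMicromega.Q2R_0.
    destruct (Rle_dec 0 (Q2R x)); [nra|].
    assert (v = 0) by nra. subst v. lra.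
  - assert (Hn : Q2R (w * x) < 0).
    { apply Rnot_le_lt. intros H'. rewrite <- RMicromega.Q2R_0 in H'.
      apply Rle_Qle, Qle_bool_iff in H'. congruence. }
    rewrite Q2R_mult in *. assert (Q2R x < 0) by nra. nra.
Qed.

Lemma horner_lb_le l w v : 0 <= v <= Q2R w -> Q2R (horner_lb l w) <= horner (map Q2R l) v.
Proof.
  intros Hv. induction l as [|c l IH]; simpl.
  - rewrite RMicromega.Q2R_0. lra.
  - rewrite Q2R_plus. pose proof (Qmin0_mul_le v w (horner_lb l w) Hv). nra.
Qed.

Definition nonneg_on (l : list Q) (w : Q) : bool :=
  Qle_bool 0 (horner_lb l w) ||
  match l with c :: l' => Qle_bool 0 c && Qle_bool 0 (horner_lb l' w) | nil => true end.

Lemma nonneg_on_sound l w v :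
  nonneg_on l w = true -> 0 <= v <= Q2R w -> 0 <= horner (map Q2R l) v.
Proof.
  intros Hok Hv. apply orb_true_iff in Hok as [H|H].
  - apply Qle_bool_iff, Qle_Rle in H. rewrite RMicromega.Q2R_0 in H.
    pose proof (horner_lb_le l w v Hv). lra.
  - destruct l as [|c l]; simpl; [lra|].
    apply andb_true_iff in H as [H1 H2].
    apply Qle_bool_iff, Qle_Rle in H1, H2. rewrite RMicromega.Q2R_0 in H1, H2.
    pose proof (horner_lb_le l w v Hv). nra.
Qed.

Fixpoint pos_pow2 (m : nat) : positive :=
  match m with O => 1 | S m' => xO (pos_pow2 m') end.

Lemma IZR_pos_pow2 m : IZR (Zpos (pos_pow2 m)) = 2 ^ m.
Proof.
  induction m as [|m IH]; [reflexivity|].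
  simpl pos_pow2. rewrite Pos2Z.inj_xO, mult_IZR, IH. simpl. ring.
Qed.

Definition dyadic (i m : nat) : Q := Qmake (Z.of_nat i) (pos_pow2 m).

Lemma Q2R_dyadic i m : Q2R (dyadic i m) = INR i / 2 ^ m.
Proof. unfold dyadic. rewrite Q2R_Qmake, IZR_pos_pow2, <- INR_IZR_INZ. reflexivity. Qed.

(* 1 - 2^-(m+10) <= exp(-2^-(m+10)), squared ten times with rounding down; the
   error is far smaller than for 1 - 2^-m, which matters as it compounds along
   the grid. *)
Definition exp_step_lb (m : nat) : Q :=
  Nat.iter 10 (fun x => rdown (x * x))
    (Qmake (Zpos (pos_pow2 (m + 10)) - 1) (pos_pow2 (m + 10))).

Lemma exp_step_lb_spec m : 0 <= Q2R (exp_step_lb m) <= exp (- (1 / 2 ^ m)).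
Proof.
  assert (Hsq : forall k x c, 0 <= Q2R x <= exp (- c) ->
    0 <= Q2R (Nat.iter k (fun x => rdown (x * x)) x) <= exp (- (2 ^ k * c))).
  { intros k x c Hx. induction k as [|k IH].
    - simpl. rewrite Rmult_1_l. exact Hx.
    - simpl Nat.iter. split.
      + apply Q2R_rdown_nonneg. rewrite Q2R_mult. nra.
      + eapply Rle_trans; [apply Q2R_rdown_le|]. rewrite Q2R_mult.
        replace (- (2 ^ S k * c)) with (- (2 ^ k * c) + - (2 ^ k * c)) by (simpl; ring).
        rewrite exp_plus. apply Rmult_le_compat; lra. }
  pose proof (pow_lt 2 (m + 10) ltac:(lra)).
  pose proof (pow_R1_Rle 2 (m + 10) ltac:(lra)).
  replace (1 / 2 ^ m) with (2 ^ 10 * (1 / 2 ^ (m + 10)))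
    by (rewrite pow_add; field; apply pow_nonzero; lra).
  apply Hsq. rewrite Q2R_Qmake, minus_IZR, IZR_pos_pow2.
  replace ((2 ^ (m + 10) - 1) / 2 ^ (m + 10)) with (1 + - (1 / 2 ^ (m + 10)))
    by (field; lra).
  assert (1 / 2 ^ (m + 10) <= 1) by (unfold Rdiv; rewrite Rmult_1_l; apply Rinv_le_1; lra).
  split; [lra | apply exp_ineq1_le].
Qed.

Section GridCertificate.

Variable P : R -> R -> R.
Variable shift : Q -> Q -> list Q.
Hypothesis shift_spec :
  forall a L v, P (Q2R a + v) (Q2R L * (1 - v)) = horner (map Q2R (shift a L)) v.
Hypothesis P_mono :
  forall u E E', 0 <= u -> 0 <= E' <= E -> E <= 1 -> P u E' <= P u E.

(* On a cell, e^-u >= L (1 - v) where v is the offset of u in the cell and L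
   bounds e^-u from below at its left end. *)
Lemma cell_nonneg m i L u :
  0 <= Q2R L <= exp (- (INR i / 2 ^ m)) ->
  nonneg_on (shift (dyadic i m) L) (dyadic 1 m) = true ->
  INR i / 2 ^ m <= u <= INR (S i) / 2 ^ m -> 0 <= P u (exp (- u)).
Proof.
  intros HL Hok Hu. pose proof (pow_lt 2 m ltac:(lra)) as Hm.
  assert (Hi : 0 <= INR i / 2 ^ m) by (apply Rdiv_le_0_compat; [apply pos_INR | lra]).
  assert (Hw : 1 / 2 ^ m <= 1)
    by (unfold Rdiv; rewrite Rmult_1_l; apply Rinv_le_1, pow_R1_Rle; lra).
  set (v := u - INR i / 2 ^ m).
  assert (Hv : 0 <= v <= 1 / 2 ^ m).
  { replace (1 / 2 ^ m) with (INR (S i) / 2 ^ m - INR i / 2 ^ m)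
      by (rewrite S_INR; field; lra).
    unfold v. lra. }
  assert (HE : Q2R L * (1 - v) <= exp (- u)).
  { replace (- u) with (- (INR i / 2 ^ m) + - v) by (unfold v; ring).
    rewrite exp_plus. pose proof (exp_ineq1_le (- v)).
    apply Rmult_le_compat; lra. }
  assert (HE0 : 0 <= Q2R L * (1 - v)) by (apply Rmult_le_pos; lra).
  eapply Rle_trans;
    [|exact (P_mono u _ _ ltac:(lra) (conj HE0 HE) (exp_neg_le_1 u ltac:(lra)))].
  replace u with (Q2R (dyadic i m) + v) by (rewrite Q2R_dyadic; unfold v; ring).
  rewrite shift_spec. apply (nonneg_on_sound _ _ _ Hok).
  rewrite Q2R_dyadic. simpl INR. lra.
Qed.

(* [L] bounds e^-u from below at the current grid point i/2^m, and [T] bounds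
   e^(-2^-m) from below. *)
Fixpoint grid_check (m : nat) (T : Q) (fuel i : nat) (L : Q) : bool :=
  match fuel with
  | O => true
  | S f =>
      Qle_bool 0 L && nonneg_on (shift (dyadic i m) L) (dyadic 1 m)
      && grid_check m T f (S i) (rdown (L * T))
  end.

Lemma grid_check_sound m T :
  0 <= Q2R T <= exp (- (1 / 2 ^ m)) ->
  forall fuel i L, (0 < fuel)%nat -> grid_check m T fuel i L = true ->
  Q2R L <= exp (- (INR i / 2 ^ m)) ->
  forall u, INR i / 2 ^ m <= u <= INR (i + fuel) / 2 ^ m -> 0 <= P u (exp (- u)).
Proof.
  intros HT. pose proof (pow_lt 2 m ltac:(lra)) as Hm.
  induction fuel as [|f IH]; intros i L Hf Hc HL u Hu; [lia|].
  simpl in Hc. apply andb_true_iff in Hc as [Hc Hrec].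
  apply andb_true_iff in Hc as [HL0 Hok].
  apply Qle_bool_iff, Qle_Rle in HL0. rewrite RMicromega.Q2R_0 in HL0.
  destruct (Rle_dec u (INR (S i) / 2 ^ m)) as [Hle|Hgt].
  - apply (cell_nonneg m i L); [lra | exact Hok | lra].
  - destruct f as [|f]; [rewrite Nat.add_1_r in Hu; lra|].
    apply (IH (S i) (rdown (L * T)) ltac:(lia) Hrec);
      [|rewrite <- Nat.add_succ_comm in Hu; lra].
    eapply Rle_trans; [apply Q2R_rdown_le|]. rewrite Q2R_mult.
    replace (- (INR (S i) / 2 ^ m)) with (- (INR i / 2 ^ m) + - (1 / 2 ^ m))
      by (rewrite S_INR; field; lra).
    rewrite exp_plus. apply Rmult_le_compat; lra.
Qed.

Lemma grid_certificate m n : (0 < n)%nat ->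
  grid_check m (exp_step_lb m) n 0 1 = true ->
  forall u, 0 <= u <= INR n / 2 ^ m -> 0 <= P u (exp (- u)).
Proof.
  intros Hn Hc u Hu. apply (grid_check_sound m _ (exp_step_lb_spec m) n 0 1 Hn Hc).
  - rewrite RMicromega.Q2R_1. simpl INR. unfold Rdiv. rewrite Rmult_0_l, Ropp_0, exp_0. lra.
  - simpl INR. unfold Rdiv. rewrite Rmult_0_l. lra.
Qed.

End GridCertificate.

(* With t = p/(1-p) and u = s t, the distance from the closed-form bound on
   h_J12 (resp. h_Jsym), with (1-p)^s replaced by E = e^-u, to the target,
   multiplied by u (resp. 2u), is affine in t on [0, u]; at t = 0 and t = u it
   is minus the lo and hi gaps. *)
Definition gap12_lo (u E : R) : R := E * (1 + 2 * u) - 1 + 21829 / 100000 * u.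
Definition gap12_hi (u E : R) : R :=
  E * (1 + 3 * u) - 1 - 78171 / 100000 * u + 6066 / 10000 * u ^ 2.
Definition gapsym_lo (u E : R) : R := E ^ 2 * (1 - u) + 4 * u * E + 1785 / 10000 * u - 1.
Definition gapsym_hi (u E : R) : R :=
  E ^ 2 + 4 * u * E - 1 - 8215 / 10000 * u + 6114 / 10000 * u ^ 2.

Definition gap12_lo_shift (a L : Q) : list Q :=
  [(L * (1 + 2 * a) - 1 + (21829 # 100000) * a)%Q;
   (L * (1 - 2 * a) + (21829 # 100000))%Q;
   (- (2 * L))%Q].

Definition gap12_hi_shift (a L : Q) : list Q :=
  [(L * (1 + 3 * a) - 1 - (78171 # 100000) * a + (6066 # 10000) * a * a)%Q;
   (L * (2 - 3 * a) - (78171 # 100000) + 2 * (6066 # 10000) * a)%Q;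
   (- (3 * L) + (6066 # 10000))%Q].

Definition gapsym_lo_shift (a L : Q) : list Q :=
  [(L * L * (1 - a) + 4 * L * a + (1785 # 10000) * a - 1)%Q;
   (L * L * (2 * a - 3) + 4 * L * (1 - a) + (1785 # 10000))%Q;
   (L * L * (3 - a) - 4 * L)%Q;
   (- (L * L))%Q].

Definition gapsym_hi_shift (a L : Q) : list Q :=
  [(L * L + 4 * L * a - 1 - (8215 # 10000) * a + (6114 # 10000) * a * a)%Q;
   (- (2 * L * L) + 4 * L * (1 - a) - (8215 # 10000) + 2 * (6114 # 10000) * a)%Q;
   (L * L - 4 * L + (6114 # 10000))%Q].

Ltac Q2R_expand :=
  cbn [map horner];
  repeat rewrite ?Q2R_plus, ?Q2R_mult, ?Q2R_minus, ?Q2R_opp; rewrite ?Q2R_Qmake.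

Lemma gap12_lo_shift_spec a L v :
  gap12_lo (Q2R a + v) (Q2R L * (1 - v)) = horner (map Q2R (gap12_lo_shift a L)) v.
Proof. unfold gap12_lo, gap12_lo_shift. Q2R_expand. field. Qed.

Lemma gap12_hi_shift_spec a L v :
  gap12_hi (Q2R a + v) (Q2R L * (1 - v)) = horner (map Q2R (gap12_hi_shift a L)) v.
Proof. unfold gap12_hi, gap12_hi_shift. Q2R_expand. field. Qed.

Lemma gapsym_lo_shift_spec a L v :
  gapsym_lo (Q2R a + v) (Q2R L * (1 - v)) = horner (map Q2R (gapsym_lo_shift a L)) v.
Proof. unfold gapsym_lo, gapsym_lo_shift. Q2R_expand. field. Qed.

Lemma gapsym_hi_shift_spec a L v :
  gapsym_hi (Q2R a + v) (Q2R L * (1 - v)) = horner (map Q2R (gapsym_hi_shift a L)) v.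
Proof. unfold gapsym_hi, gapsym_hi_shift. Q2R_expand. field. Qed.

Lemma gap12_lo_mono u E E' : 0 <= u -> 0 <= E' <= E -> E <= 1 ->
  gap12_lo u E' <= gap12_lo u E.
Proof. intros. unfold gap12_lo. nra. Qed.

Lemma gap12_hi_mono u E E' : 0 <= u -> 0 <= E' <= E -> E <= 1 ->
  gap12_hi u E' <= gap12_hi u E.
Proof. intros. unfold gap12_hi. nra. Qed.

Lemma gapsym_lo_mono u E E' : 0 <= u -> 0 <= E' <= E -> E <= 1 ->
  gapsym_lo u E' <= gapsym_lo u E.
Proof.
  intros Hu HE HE1. unfold gapsym_lo.
  assert (0 <= (E + E') * (1 - u) + 4 * u) by (destruct (Rle_dec u 1); nra).
  nra.
Qed.

Lemma gapsym_hi_mono u E E' : 0 <= u -> 0 <= E' <= E -> E <= 1 ->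
  gapsym_hi u E' <= gapsym_hi u E.
Proof. intros. unfold gapsym_hi. nra. Qed.

Lemma gap12_lo_nonneg u : 0 < u -> 0 <= gap12_lo u (exp (- u)).
Proof.
  intros Hu. destruct (Rle_dec u (46 / 10)).
  - apply (grid_certificate _ _ gap12_lo_shift_spec gap12_lo_mono 6 295); [lia | vm_compute; reflexivity|].
    simpl pow. rewrite INR_IZR_INZ. simpl (Z.of_nat _). lra.
  - unfold gap12_lo. pose proof (exp_pos (- u)). nra.
Qed.

Lemma gap12_hi_nonneg u : 0 < u -> 0 <= gap12_hi u (exp (- u)).
Proof.
  intros Hu. destruct (Rle_dec u (25 / 10)).
  - apply (grid_certificate _ _ gap12_hi_shift_spec gap12_hi_mono 4 40); [lia | vm_compute; reflexivity|].
    simpl pow. rewrite INR_IZR_INZ. simpl (Z.of_nat _). lra.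
  - unfold gap12_hi. pose proof (exp_pos (- u)). nra.
Qed.

Lemma gapsym_lo_nonneg u : 0 < u -> 0 <= gapsym_lo u (exp (- u)).
Proof.
  intros Hu. destruct (Rle_dec u 6).
  - apply (grid_certificate _ _ gapsym_lo_shift_spec gapsym_lo_mono 5 192); [lia | vm_compute; reflexivity|].
    simpl pow. rewrite INR_IZR_INZ. simpl (Z.of_nat _). lra.
  - unfold gapsym_lo. set (E := exp (- u)).
    assert (0 < E) by apply exp_pos. assert (E <= 1) by (apply exp_neg_le_1; lra).
    assert (0 <= u * E * (4 - E)) by (apply Rmult_le_pos; [apply Rmult_le_pos|]; lra).
    nra.
Qed.

Lemma gapsym_hi_nonneg u : 0 < u -> 0 <= gapsym_hi u (exp (- u)).
Proof.
  intros Hu. destruct (Rle_dec u (25 / 10)).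
  - apply (grid_certificate _ _ gapsym_hi_shift_spec gapsym_hi_mono 4 40); [lia | vm_compute; reflexivity|].
    simpl pow. rewrite INR_IZR_INZ. simpl (Z.of_nat _). lra.
  - unfold gapsym_hi. pose proof (exp_pos (- u)). nra.
Qed.

(** * The bounds for general p *)

Lemma affine_endpoints_nonpos u t f0 fu : 0 < u -> 0 <= t <= u -> f0 <= 0 -> fu <= 0 ->
  (u - t) / u * f0 + t / u * fu <= 0.
Proof.
  intros Hu Ht H0 H1.
  assert (0 <= (u - t) / u) by (apply Rdiv_le_0_compat; lra).
  assert (0 <= t / u) by (apply Rdiv_le_0_compat; lra).
  nra.
Qed.

Lemma h_J12_le_affine s p : (1 <= s)%nat -> 0 < p < 1 ->
  h J12 s p <= 121829 / 100000 + 16066 / 10000 * (p / (1 - p)).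
Proof.
  intros Hs Hp.
  eapply Rle_trans; [exact (h_J12_le s p Hs Hp)|].
  pose proof (exp_le_pow_one_sub s p Hp) as HE.
  set (t := p / (1 - p)) in *.
  assert (Ht : 0 < t) by (apply Rdiv_lt_0_compat; lra).
  assert (HS : 1 <= INR s) by (apply (le_INR 1); lia).
  set (u := INR s * t) in *.
  assert (Hu : t <= u) by (unfold u; nra).
  set (E := exp (- u)) in *. set (y := (1 - p) ^ s) in *.
  assert (Hsp : 0 < INR s * p) by nra.
  assert (Hy : (1 - y) / (INR s * p) - 2 * y <= (1 - E) / (INR s * p) - 2 * E).
  { unfold Rdiv. pose proof (Rinv_0_lt_compat _ Hsp). nra. }
  set (X := 1 / (1 - p) + (1 - E) / (INR s * p) - 2 * E - (121829 / 100000 + 16066 / 10000 * t)).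
  assert (Key : u * X = (u - t) / u * - gap12_lo u E + t / u * - gap12_hi u E)
    by (unfold X, gap12_lo, gap12_hi, u, t; field; lra).
  pose proof (gap12_lo_nonneg u ltac:(lra)) as G0. pose proof (gap12_hi_nonneg u ltac:(lra)) as G1.
  fold E in G0, G1.
  pose proof (affine_endpoints_nonpos u t (- gap12_lo u E) (- gap12_hi u E)
    ltac:(lra) ltac:(lra) ltac:(lra) ltac:(lra)).
  assert (X <= 0) by (apply Rmult_le_reg_l with u; lra).
  unfold X in *. lra.
Qed.

(* The factor (1-p^2)^-s = (1 + t^2/(1+2t))^s <= e^c with c = u t/(1+2t), and
   c <= min(u t, u/2), so the excess is at most t (u e^(-3u/2)) <= t/3. *)
Lemma exp_sq_div_pow_le s p : (1 <= s)%nat -> 0 < p < 1 ->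
  exp (- (INR s * (p / (1 - p)))) ^ 2 / (1 - p ^ 2) ^ s
  <= exp (- (INR s * (p / (1 - p)))) ^ 2 + p / (1 - p) / 3.
Proof.
  intros Hs Hp.
  set (t := p / (1 - p)).
  assert (Ht : 0 < t) by (apply Rdiv_lt_0_compat; lra).
  assert (HS : 1 <= INR s) by (apply (le_INR 1); lia).
  set (u := INR s * t).
  assert (Hu : t <= u) by (unfold u; nra).
  set (c := u * t / (1 + 2 * t)).
  assert (HK : / (1 - p ^ 2) ^ s <= exp c).
  { rewrite <- pow_inv.
    replace (/ (1 - p ^ 2)) with (1 + t ^ 2 / (1 + 2 * t)) by (unfold t; field; split; nra).
    replace c with (INR s * (t ^ 2 / (1 + 2 * t))) by (unfold c, u; field; lra).
    apply one_add_pow_le_exp. assert (0 <= t ^ 2 / (1 + 2 * t)) by (apply Rdiv_le_0_compat; nra).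
    lra. }
  assert (Hc0 : 0 <= c) by (apply Rdiv_le_0_compat; nra).
  assert (Hc1 : c <= u * t).
  { unfold c. apply Rmult_le_reg_r with (1 + 2 * t); [lra|].
    unfold Rdiv. rewrite Rmult_assoc, Rinv_l by lra. nra. }
  assert (Hc2 : exp c <= exp (u / 2)).
  { apply exp_le_exp. unfold c. apply Rmult_le_reg_r with (1 + 2 * t); [lra|].
    unfold Rdiv. rewrite Rmult_assoc, Rinv_l by lra. nra. }
  set (E := exp (- u)).
  assert (HE : E ^ 2 * exp (u / 2) = exp (- (3 * u / 2))).
  { unfold E. simpl pow. rewrite Rmult_1_r, <- !exp_plus. f_equal. field. }
  assert (H3 : u * exp (- (3 * u / 2)) <= 1 / 3).
  { rewrite exp_Ropp. pose proof (twice_le_exp (3 * u / 2) ltac:(lra)).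
    pose proof (exp_pos (3 * u / 2)).
    apply Rmult_le_reg_r with (exp (3 * u / 2)); [lra|].
    rewrite Rmult_assoc, Rinv_l by lra. lra. }
  pose proof (exp_sub_one_le c). pose proof (exp_pos c).
  assert (HE0 : 0 <= E ^ 2) by apply pow2_ge_0.
  assert (Hexcess : E ^ 2 * (exp c - 1) <= E ^ 2 * (u * t * exp (u / 2))).
  { apply Rmult_le_compat_l; [exact HE0|].
    apply Rle_trans with (c * exp c); [lra|]. apply Rmult_le_compat; lra. }
  replace (E ^ 2 * (u * t * exp (u / 2))) with (t * (u * exp (- (3 * u / 2))))
    in Hexcess by (rewrite <- HE; ring).
  unfold Rdiv at 1. apply Rmult_le_compat_l with (r := E ^ 2) in HK; [|exact HE0].
  nra.
Qed.

Lemma h_Jsym_le_exp s p : (1 <= s)%nat -> 0 < p < 1 ->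
  let E := exp (- (INR s * (p / (1 - p)))) in
  h Jsym s p <= 1 / (2 * (1 - p)) + (1 - E ^ 2) / (2 * INR s * p)
                + E ^ 2 / (1 - p ^ 2) ^ s / 2 - 2 * E.
Proof.
  intros Hs Hp E.
  eapply Rle_trans; [exact (h_Jsym_le s p Hs Hp)|].
  pose proof (exp_le_pow_one_sub s p Hp) as HyE. fold E in HyE.
  pose proof (exp_pos (- (INR s * (p / (1 - p))))) as HE0. fold E in HE0.
  set (y := (1 - p) ^ s) in *.
  assert (Hy : 0 < y <= 1) by (split; [apply pow_lt | apply pow_one_sub_le_1]; lra).
  assert (Hq : 1 <= (1 + p) ^ s) by (apply pow_R1_Rle; lra).
  assert (Hyq : (1 - p ^ 2) ^ s = y * (1 + p) ^ s)
    by (unfold y; rewrite <- Rpow_mult_distr; f_equal; ring).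
  set (K := / (1 - p ^ 2) ^ s).
  assert (HK1 : 1 <= K).
  { unfold K. pose proof (pow_one_sub_le_1 (p ^ 2) s ltac:(split; nra)).
    pose proof (pow_lt (1 - p ^ 2) s ltac:(nra)).
    apply Rmult_le_reg_l with ((1 - p ^ 2) ^ s); [lra|]. rewrite Rinv_r by lra. lra. }
  assert (HKy : K * y <= 1).
  { unfold K. rewrite Hyq. replace (/ (y * (1 + p) ^ s) * y) with (/ (1 + p) ^ s) by (field; nra).
    apply Rinv_le_1; lra. }
  assert (Hw : y / (1 + p) ^ s = y ^ 2 * K) by (unfold K; rewrite Hyq; field; nra).
  replace (E ^ 2 / (1 - p ^ 2) ^ s / 2) with (E ^ 2 * K / 2) by (unfold K; field; nra).
  rewrite Hw.
  assert (HS : 0 < INR s) by (apply lt_0_INR; lia).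
  set (I := 1 / (2 * INR s * p)).
  assert (HI : 0 < I) by (apply Rdiv_lt_0_compat; nra).
  replace ((1 - E ^ 2) / (2 * INR s * p)) with (I - E ^ 2 * I)
    by (unfold I; field; split; lra).
  assert (Hp1 : 1 / (2 * (1 + p)) <= 1 / 2)
    by (unfold Rdiv; rewrite !Rmult_1_l; apply Rinv_le_contravar; lra).
  (* as a function of y, y^2 K (1/2 - I) - 2 y decreases on [E, 1] *)
  assert (y ^ 2 * K * (1 / (2 * (1 + p))) <= y ^ 2 * K / 2).
  { assert (0 <= y ^ 2 * K) by (apply Rmult_le_pos; [apply pow2_ge_0 | lra]). nra. }
  assert (- (y ^ 2 * K * I) <= - (y ^ 2 * I)) by (assert (0 <= y ^ 2 * I) by nra; nra).
  assert ((y + E) * (K / 2 - I) - 2 <= 0) by nra.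
  assert ((y - E) * ((y + E) * (K / 2 - I) - 2) <= 0) by nra.
  nra.
Qed.

Lemma h_Jsym_le_affine s p : (1 <= s)%nat -> 0 < p < 1 ->
  h Jsym s p <= 58925 / 100000 + 9724 / 10000 * (p / (1 - p)).
Proof.
  intros Hs Hp.
  eapply Rle_trans; [exact (h_Jsym_le_exp s p Hs Hp)|].
  pose proof (exp_sq_div_pow_le s p Hs Hp) as HK.
  set (t := p / (1 - p)) in *.
  assert (Ht : 0 < t) by (apply Rdiv_lt_0_compat; lra).
  assert (HS : 1 <= INR s) by (apply (le_INR 1); lia).
  set (u := INR s * t) in *.
  assert (Hu : t <= u) by (unfold u; nra).
  pose proof (gapsym_lo_nonneg u ltac:(lra)) as G0.
  pose proof (gapsym_hi_nonneg u ltac:(lra)) as G1.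
  set (E := exp (- u)) in *.
  set (X := 1 / (2 * (1 - p)) + (1 - E ^ 2) / (2 * INR s * p) + (E ^ 2 + t / 3) / 2 - 2 * E
            - (58925 / 100000 + 9724 / 10000 * t)).
  (* gapsym_hi rounds the coefficient 4/3 - 19448/10000 of u^2 down by 1/15000 *)
  assert (Key : 2 * u * X = (u - t) / u * - gapsym_lo u E
                            + t / u * (- gapsym_hi u E - u ^ 2 / 15000))
    by (unfold X, gapsym_lo, gapsym_hi, u, t; field; lra).
  pose proof (affine_endpoints_nonpos u t (- gapsym_lo u E) (- gapsym_hi u E - u ^ 2 / 15000)
    ltac:(lra) ltac:(lra) ltac:(lra) ltac:(nra)).
  assert (X <= 0) by (apply Rmult_le_reg_l with (2 * u); lra).
  unfold X in *. lra.
Qed.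

(** * Exact evaluation at p = 1/n *)

Lemma sum_f_R0_le_mono (c : nat -> R) M N : (forall k, 0 <= c k) -> (M <= N)%nat ->
  sum_f_R0 c M <= sum_f_R0 c N.
Proof.
  intros Hc HMN. induction HMN as [|N HMN IH]; [lra|].
  rewrite tech5. specialize (Hc (S N)). lra.
Qed.

Lemma sum_f_R0_le_geometric_tail (c a : nat -> R) K rho :
  (forall k, 0 <= c k <= a k) -> 0 <= rho < 1 ->
  (forall k, (K <= k)%nat -> a (S k) <= rho * a k) ->
  forall N, sum_f_R0 c N <= sum_f_R0 c K + rho * a K / (1 - rho).
Proof.
  intros Hca Hrho Hratio N.
  assert (Ha : forall k, 0 <= a k) by (intros k; specialize (Hca k); lra).
  assert (0 <= rho * a K / (1 - rho))
    by (apply Rdiv_le_0_compat; [apply Rmult_le_pos; [lra | apply Ha] | lra]).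
  destruct (le_lt_dec N K) as [HN|HN].
  { pose proof (sum_f_R0_le_mono c N K (fun k => proj1 (Hca k)) HN). lra. }
  rewrite (tech2 c K N HN).
  assert (Htail : forall m, (1 - rho) * sum_f_R0 (fun i => a (S K + i)%nat) m
                            + rho * a (S K + m)%nat <= rho * a K).
  { induction m as [|m IH].
    - simpl sum_f_R0. rewrite !Nat.add_0_r.
      pose proof (Hratio K (Nat.le_refl K)). lra.
    - rewrite tech5. pose proof (Hratio (S K + m)%nat ltac:(lia)) as Hm.
      rewrite <- Nat.add_succ_r in Hm. lra. }
  pose proof (sum_growing _ (fun i => a (S K + i)%nat) (N - S K)
                (fun i => proj2 (Hca (S K + i)%nat))).
  pose proof (Htail (N - S K)%nat). pose proof (Ha (S K + (N - S K))%nat).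
  assert (sum_f_R0 (fun i => a (S K + i)%nat) (N - S K) <= rho * a K / (1 - rho)).
  { apply Rmult_le_reg_r with (1 - rho); [lra|]. unfold Rdiv.
    rewrite Rmult_assoc, Rinv_l by lra. nra. }
  lra.
Qed.

Lemma Series_le_of_partial_sums (a : nat -> R) M :
  (forall n, 0 <= a n) -> (forall N, sum_f_R0 a N <= M) -> Series a <= M.
Proof.
  intros Hp HN. unfold Series.
  assert (HM : 0 <= M) by (specialize (HN O); specialize (Hp O); simpl in HN; lra).
  assert (H : Rbar_le (Lim_seq (sum_n a)) (Lim_seq (fun _ => M))).
  { apply Lim_seq_le_loc. exists O. intros N _. rewrite sum_n_Reals. apply HN. }
  rewrite Lim_seq_const in H.
  destruct (Lim_seq (sum_n a)) as [l| |]; simpl in *; lra.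
Qed.

Definition Z_div_ceil (x y : Z) : Z := ((x + y - 1) / y)%Z.

Lemma Z_div_ceil_ge x y : (0 < y)%Z -> IZR x / IZR y <= IZR (Z_div_ceil x y).
Proof.
  intros Hy. unfold Z_div_ceil.
  pose proof (Z.div_mod (x + y - 1) y ltac:(lia)).
  pose proof (Z.mod_pos_bound (x + y - 1) y Hy).
  assert (Hx : (x <= y * ((x + y - 1) / y))%Z) by lia.
  apply IZR_le in Hx. rewrite mult_IZR in Hx.
  assert (0 < IZR y) by (apply IZR_lt; lia).
  apply Rmult_le_reg_r with (IZR y); [lra|].
  unfold Rdiv. rewrite Rmult_assoc, Rinv_l by lra. lra.
Qed.

Definition scale : Z := 1125899906842624%Z.

(* Fixed-point arithmetic with unit 1/scale, every division rounded up. *)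
Fixpoint scaled_sums (n s : nat) (J : nat -> bool) (k : nat) : Z * Z :=
  match k with
  | O => (Z_div_ceil (scale * (Z.of_nat n - 1) ^ Z.of_nat s * (Z.of_nat n * Z.of_nat n))
                     (Z.of_nat n ^ Z.of_nat s), 0%Z)
  | S k' =>
      let '(A, Sm) := scaled_sums n s J k' in
      let A' := Z_div_ceil (A * Z.of_nat (k + s)) (Z.of_nat k * Z.of_nat n) in
      (A', (Sm + if ((1 <=? k)%nat && negb (J k))%bool
                 then Z_div_ceil (A' * (Z.of_nat k * Z.of_nat k))
                                 (Z.of_nat (k + s) * Z.of_nat (k + s))
                 else 0)%Z)
  end.

Lemma one_div_INR_bounds n : (2 <= n)%nat -> 0 < 1 / INR n < 1.
Proof.
  intros Hn. pose proof (le_INR 2 n Hn) as H2. simpl in H2.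
  split; [apply Rdiv_lt_0_compat; lra|].
  apply Rmult_lt_reg_r with (INR n); [lra|].
  unfold Rdiv. rewrite Rmult_assoc, Rinv_l by lra. lra.
Qed.

Lemma nbinom_pow_inv_S s n k : (1 <= n)%nat ->
  nbinom s (S k) * (1 / INR n) ^ S k
  = nbinom s k * (1 / INR n) ^ k * (INR (S k + s) / (INR (S k) * INR n)).
Proof.
  intros Hn. assert (0 < INR n) by (apply lt_0_INR; lia).
  assert (0 < INR (S k)) by (apply lt_0_INR; lia).
  rewrite nbinom_S. simpl pow. field. lra.
Qed.

Lemma scaled_sums_spec n s J : (2 <= n)%nat -> forall k,
  let p := 1 / INR n in
  let f := (1 - p) ^ s / p ^ 2 in
  IZR scale * (f * (nbinom s k * p ^ k)) <= IZR (fst (scaled_sums n s J k)) /\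
  IZR scale * (f * sum_f_R0 (hterm J s p) k) <= IZR (snd (scaled_sums n s J k)).
Proof.
  intros Hn k p f.
  assert (HD : 0 < IZR scale) by (apply IZR_lt; reflexivity).
  assert (Hn0 : 2 <= INR n) by (apply (le_INR 2); lia).
  pose proof (one_div_INR_bounds n Hn) as Hp. fold p in Hp.
  assert (Hf : 0 < f) by (apply Rdiv_lt_0_compat; apply pow_lt; lra).
  assert (Hup : forall x (z y : Z), (0 < y)%Z -> x <= IZR z / IZR y -> x <= IZR (Z_div_ceil z y))
    by (intros x z y Hy Hx; eapply Rle_trans; [exact Hx | apply Z_div_ceil_ge, Hy]).
  induction k as [|k IH].
  - split; cbn [scaled_sums fst snd sum_f_R0].
    + apply Hup; [apply Z.pow_pos_nonneg; lia|].
      rewrite !mult_IZR, <- !pow_IZR, minus_IZR, <- INR_IZR_INZ.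
      right. unfold f, p. replace (1 - 1 / INR n) with ((INR n - 1) / INR n) by (field; lra).
      pose proof (pow_lt (INR n) s ltac:(lra)).
      unfold Rdiv. rewrite Rpow_mult_distr, pow_inv. cbn [nbinom pow]. field. lra.
    + unfold hterm. simpl. rewrite !Rmult_0_r. lra.
  - cbn [scaled_sums]. destruct (scaled_sums n s J k) as [A Sm]. cbn [fst snd] in *.
    destruct IH as [IHa IHc].
    set (A' := Z_div_ceil (A * Z.of_nat (S k + s)) (Z.of_nat (S k) * Z.of_nat n)).
    assert (HSk : 0 < INR (S k)) by (apply lt_0_INR; lia).
    assert (Ha : IZR scale * (f * (nbinom s (S k) * p ^ S k)) <= IZR A').
    { apply Hup; [apply Z.mul_pos_pos; lia|].
      rewrite !mult_IZR, <- !INR_IZR_INZ.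
      unfold p. rewrite nbinom_pow_inv_S by lia. fold p.
      replace (IZR A * INR (S k + s) / (INR (S k) * INR n))
        with (IZR A * (INR (S k + s) / (INR (S k) * INR n))) by (field; lra).
      set (r := INR (S k + s) / (INR (S k) * INR n)).
      replace (IZR scale * (f * (nbinom s k * p ^ k * r)))
        with (IZR scale * (f * (nbinom s k * p ^ k)) * r) by ring.
      apply Rmult_le_compat_r; [apply Rdiv_le_0_compat; [apply pos_INR | nra] | exact IHa]. }
    split; [exact Ha|].
    rewrite tech5, !Rmult_plus_distr_l, plus_IZR.
    apply Rplus_le_compat; [exact IHc|].
    unfold hterm. destruct (_ && _)%bool eqn:Hc; [|rewrite !Rmult_0_r; lra].
    apply andb_true_iff in Hc as [Hc _]. apply Nat.leb_le in Hc.
    apply Hup; [apply Z.mul_pos_pos; lia|].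
    rewrite !mult_IZR, <- !INR_IZR_INZ, binomial_C_nbinom.
    assert (0 < INR (S k + s)) by (apply lt_0_INR; lia).
    assert (Hw : 0 <= INR (S k) ^ 2 / INR (S k + s) ^ 2)
      by (apply Rdiv_le_0_compat; [apply pow2_ge_0 | apply pow_lt; lra]).
    replace (IZR scale * (f * (INR (S k) ^ 2 / INR (S k + s) ^ 2 * nbinom s (S k) * p ^ S k)))
      with (INR (S k) ^ 2 / INR (S k + s) ^ 2 * (IZR scale * (f * (nbinom s (S k) * p ^ S k))))
      by ring.
    replace (IZR A' * (INR (S k) * INR (S k)) / (INR (S k + s) * INR (S k + s)))
      with (INR (S k) ^ 2 / INR (S k + s) ^ 2 * IZR A') by (field; lra).
    apply Rmult_le_compat_l; [exact Hw | exact Ha].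
Qed.

Lemma hterm_le_nbinom J s p k : 0 < p -> hterm J s p k <= nbinom s k * p ^ k.
Proof.
  intros Hp. pose proof (nbinom_pos s k). pose proof (pow_lt p k Hp).
  assert (0 < nbinom s k * p ^ k) by (apply Rmult_lt_0_compat; lra).
  unfold hterm. rewrite binomial_C_nbinom. destruct (_ && _)%bool eqn:Hk; [|lra].
  apply andb_true_iff in Hk as [Hk _]. apply Nat.leb_le in Hk.
  assert (0 < INR (k + s)) by (apply lt_0_INR; lia).
  assert (INR k <= INR (k + s)) by (apply le_INR; lia).
  assert (INR k ^ 2 / INR (k + s) ^ 2 <= 1).
  { apply Rmult_le_reg_r with (INR (k + s) ^ 2); [apply pow_lt; lra|].
    unfold Rdiv. rewrite Rmult_assoc, Rinv_l by (apply pow_nonzero; lra).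
    pose proof (pos_INR k). nra. }
  rewrite Rmult_assoc. nra.
Qed.

Lemma nbinom_succ_ratio_le s n K k : (1 <= n)%nat -> (K <= k)%nat ->
  INR (S k + s) / (INR (S k) * INR n) <= INR (K + 1 + s) / INR ((K + 1) * n).
Proof.
  intros Hn Hk. rewrite mult_INR.
  assert (0 < INR (S k)) by (apply lt_0_INR; lia).
  assert (0 < INR (K + 1)) by (apply lt_0_INR; lia).
  assert (0 < INR n) by (apply lt_0_INR; lia).
  assert (INR (S k + s) * INR (K + 1) <= INR (K + 1 + s) * INR (S k))
    by (rewrite <- !mult_INR; apply le_INR; nia).
  apply Rmult_le_reg_r with (INR (S k) * INR n * INR (K + 1));
    [apply Rmult_lt_0_compat; [apply Rmult_lt_0_compat|]; lra|].
  replace (INR (S k + s) / (INR (S k) * INR n) * (INR (S k) * INR n * INR (K + 1)))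
    with (INR (S k + s) * INR (K + 1)) by (field; lra).
  replace (INR (K + 1 + s) / (INR (K + 1) * INR n) * (INR (S k) * INR n * INR (K + 1)))
    with (INR (K + 1 + s) * INR (S k)) by (field; lra).
  lra.
Qed.

Lemma h_inv_nat_le_truncation J n s K : (2 <= n)%nat -> (K + 1 + s < (K + 1) * n)%nat ->
  let p := 1 / INR n in
  let f := (1 - p) ^ s / p ^ 2 in
  let rho := INR (K + 1 + s) / INR ((K + 1) * n) in
  h J s p <= f * sum_f_R0 (hterm J s p) K + rho * (f * (nbinom s K * p ^ K)) / (1 - rho).
Proof.
  intros Hn HK p f rho.
  pose proof (one_div_INR_bounds n Hn) as Hp. fold p in Hp.
  assert (Hf : 0 < f) by (apply Rdiv_lt_0_compat; apply pow_lt; lra).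
  assert (Hrho : 0 <= rho < 1).
  { assert (0 < INR ((K + 1) * n)) by (apply lt_0_INR; lia).
    apply lt_INR in HK.
    split; [apply Rdiv_le_0_compat; [apply pos_INR | lra]|].
    apply Rmult_lt_reg_r with (INR ((K + 1) * n)); [lra|].
    unfold rho, Rdiv. rewrite Rmult_assoc, Rinv_l by lra. lra. }
  set (a := fun k => f * (nbinom s k * p ^ k)).
  set (c := fun k => f * hterm J s p k).
  assert (Hca : forall k, 0 <= c k <= a k).
  { intros k. unfold c, a. split; [apply Rmult_le_pos; [lra | apply hterm_nonneg; lra]|].
    apply Rmult_le_compat_l; [lra | apply hterm_le_nbinom; lra]. }
  assert (Hratio : forall k, (K <= k)%nat -> a (S k) <= rho * a k).
  { intros k Hk. unfold a.
    assert (0 < INR (S k)) by (apply lt_0_INR; lia).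
    assert (0 < INR n) by (apply lt_0_INR; lia).
    unfold p. rewrite nbinom_pow_inv_S, <- Rmult_assoc, (Rmult_comm rho) by lia. fold p. apply Rmult_le_compat_l.
    - pose proof (nbinom_pos s k). pose proof (pow_lt p k ltac:(lra)).
      apply Rmult_le_pos; [lra|]. apply Rmult_le_pos; lra.
    - apply nbinom_succ_ratio_le; lia. }
  unfold h. fold p f. rewrite <- Series_scal_l.
  apply Series_le_of_partial_sums.
  { intros k. apply Rmult_le_pos; [lra | apply hterm_nonneg; lra]. }
  intros N.
  change (sum_f_R0 c N <= f * sum_f_R0 (hterm J s p) K + rho * a K / (1 - rho)).
  replace (f * sum_f_R0 (hterm J s p) K) with (sum_f_R0 c K)
    by (rewrite scal_sum; apply sum_eq; intros; unfold c; ring).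
  exact (sum_f_R0_le_geometric_tail c a K rho Hca Hrho Hratio N).
Qed.

Definition check_h_at (K n s : nat) (J : nat -> bool) (cnum : Z) : bool :=
  let '(A, Sm) := scaled_sums n s J K in
  let den := (Z.of_nat ((K + 1) * n) - Z.of_nat (K + 1 + s))%Z in
  ((0 <? den)%Z
   && ((Sm + Z_div_ceil (A * Z.of_nat (K + 1 + s)) den) * 10000 <=? cnum * scale)%Z)%bool.

Lemma check_h_at_sound K n s J cnum : (2 <= n)%nat -> check_h_at K n s J cnum = true ->
  h J s (1 / INR n) <= IZR cnum / 10000.
Proof.
  intros Hn Hc. unfold check_h_at in Hc.
  destruct (scaled_sums_spec n s J Hn K) as [HA HS].
  destruct (scaled_sums n s J K) as [A Sm]. cbn [fst snd] in HA, HS.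
  apply andb_true_iff in Hc as [Hden Hfin].
  apply Z.ltb_lt in Hden. apply Z.leb_le, IZR_le in Hfin.
  rewrite !mult_IZR, plus_IZR in Hfin.
  set (den := (Z.of_nat ((K + 1) * n) - Z.of_nat (K + 1 + s))%Z) in *.
  set (T := Z_div_ceil (A * Z.of_nat (K + 1 + s)) den) in *.
  eapply Rle_trans; [apply (h_inv_nat_le_truncation J n s K); [exact Hn | unfold den in Hden; lia]|].
  set (p := 1 / INR n) in *. set (f := (1 - p) ^ s / p ^ 2) in *.
  set (aK := f * (nbinom s K * p ^ K)) in *.
  assert (HD : 0 < IZR scale) by (apply IZR_lt; reflexivity).
  assert (Hden' : INR ((K + 1) * n) - INR (K + 1 + s) = IZR den)
    by (unfold den; rewrite minus_IZR, <- !INR_IZR_INZ; reflexivity).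
  assert (0 < IZR den) by (apply IZR_lt; lia).
  assert (0 < INR ((K + 1) * n)) by (apply lt_0_INR; lia).
  replace (INR (K + 1 + s) / INR ((K + 1) * n) * aK / (1 - INR (K + 1 + s) / INR ((K + 1) * n)))
    with (aK * INR (K + 1 + s) / IZR den) by (rewrite <- Hden'; field; lra).
  assert (Htail : IZR scale * (aK * INR (K + 1 + s) / IZR den) <= IZR T).
  { eapply Rle_trans; [|apply Z_div_ceil_ge, Hden]. rewrite mult_IZR, <- INR_IZR_INZ.
    replace (IZR scale * (aK * INR (K + 1 + s) / IZR den))
      with (IZR scale * aK * INR (K + 1 + s) / IZR den) by (field; lra).
    unfold Rdiv. apply Rmult_le_compat_r; [left; apply Rinv_0_lt_compat; lra|].
    apply Rmult_le_compat_r; [apply pos_INR | exact HA]. }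
  apply Rmult_le_reg_l with (IZR scale * 10000); [lra|].
  replace (IZR scale * 10000 * (IZR cnum / 10000)) with (IZR cnum * IZR scale) by field.
  nra.
Qed.

Lemma h_J12_le_simple s p : (1 <= s)%nat -> 0 < p < 1 ->
  h J12 s p <= 1 / (1 - p) + 1 / (INR s * p).
Proof.
  intros Hs Hp. eapply Rle_trans; [exact (h_J12_le s p Hs Hp)|].
  pose proof (pow_lt (1 - p) s ltac:(lra)).
  assert (0 < INR s * p) by (apply Rmult_lt_0_compat; [apply lt_0_INR; lia | lra]).
  assert ((1 - (1 - p) ^ s) / (INR s * p) <= 1 / (INR s * p))
    by (apply Rmult_le_compat_r; [left; apply Rinv_0_lt_compat | ]; lra).
  lra.
Qed.

Lemma h_Jsym_le_simple s p : (1 <= s)%nat -> 0 < p < 1 ->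
  h Jsym s p <= (1 / (1 - p) + 1 / (INR s * p)) / 2.
Proof.
  intros Hs Hp. eapply Rle_trans; [exact (h_Jsym_le s p Hs Hp)|].
  pose proof (pow_lt (1 - p) s ltac:(lra)) as Hy.
  pose proof (pow_one_sub_le_1 p s ltac:(lra)).
  assert (HS : 0 < INR s) by (apply lt_0_INR; lia).
  assert (Hq : 1 <= (1 + p) ^ s) by (apply pow_R1_Rle; lra).
  set (w := (1 - p) ^ s / (1 + p) ^ s).
  assert (Hw : 0 <= w <= (1 - p) ^ s).
  { split; [apply Rdiv_le_0_compat; lra|].
    unfold w, Rdiv. rewrite <- (Rmult_1_r ((1 - p) ^ s)) at 2.
    apply Rmult_le_compat_l; [lra | apply Rinv_le_1, Hq]. }
  assert (Hp1 : 1 / (2 * (1 + p)) <= 1 / 2)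
    by (unfold Rdiv; rewrite !Rmult_1_l; apply Rinv_le_contravar; lra).
  assert (0 <= 1 / (2 * INR s * p)) by (apply Rdiv_le_0_compat; nra).
  assert (w * (1 / (2 * (1 + p)) - 1 / (2 * INR s * p)) <= (1 - p) ^ s / 2) by nra.
  replace ((1 / (1 - p) + 1 / (INR s * p)) / 2)
    with (1 / (2 * (1 - p)) + 1 / (2 * INR s * p)) by (field; lra).
  lra.
Qed.

Lemma CJ_le_of_forall J p M : (forall s, (1 <= s)%nat -> h J s p <= M) ->
  Rbar_le (CJ J p) (Finite M).
Proof.
  intros H. unfold CJ.
  destruct (Lub_Rbar_correct (fun x => exists s : nat, (1 <= s)%nat /\ x = h J s p)) as [_ Hl].
  apply Hl. intros x [s [Hs ->]]. apply H, Hs.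
Qed.

Definition check_h_below (K n : nat) (J : nat -> bool) (cnum : Z) (S0 : nat) : bool :=
  forallb (fun s => check_h_at K n s J cnum) (seq 1 (S0 - 1)).

(* For s below the thresholds, h_J(s, 1/n) is evaluated through its first 62
   summands; from the thresholds on, the simple bound n/(n-1) + n/s (halved for
   J_sym) is small enough. *)
Lemma CJ_inv_nat_le n (cn dn : Z) S1 S2 : (2 <= n)%nat -> (1 <= S1)%nat -> (1 <= S2)%nat ->
  check_h_below 61 n J12 cn S1 = true -> check_h_below 61 n Jsym dn S2 = true ->
  INR n / (INR n - 1) + INR n / INR S1 <= IZR cn / 10000 ->
  (INR n / (INR n - 1) + INR n / INR S2) / 2 <= IZR dn / 10000 ->
  Rbar_le (CJ J12 (1 / INR n)) (Finite (IZR cn / 10000)) /\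
  Rbar_le (CJ Jsym (1 / INR n)) (Finite (IZR dn / 10000)).
Proof.
  intros Hn HS1 HS2 H12 Hsym Hc Hd.
  pose proof (one_div_INR_bounds n Hn) as Hp.
  assert (Hn0 : 2 <= INR n) by (apply (le_INR 2); lia).
  assert (Hsimple : forall S0 s, (1 <= S0 <= s)%nat ->
            1 / (1 - 1 / INR n) + 1 / (INR s * (1 / INR n)) <= INR n / (INR n - 1) + INR n / INR S0).
  { intros S0 s HS.
    assert (1 <= INR S0 <= INR s) by (split; [apply (le_INR 1) | apply le_INR]; lia).
    replace (1 / (1 - 1 / INR n)) with (INR n / (INR n - 1)) by (field; lra).
    replace (1 / (INR s * (1 / INR n))) with (INR n / INR s) by (field; lra).
    apply Rplus_le_compat_l. unfold Rdiv. apply Rmult_le_compat_l; [lra|].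
    apply Rinv_le_contravar; lra. }
  unfold check_h_below in H12, Hsym. rewrite forallb_forall in H12, Hsym.
  split; apply CJ_le_of_forall; intros s Hs.
  - destruct (le_lt_dec S1 s) as [HL|HL].
    + eapply Rle_trans; [exact (h_J12_le_simple s _ Hs Hp)|].
      pose proof (Hsimple S1 s ltac:(lia)). lra.
    + apply (check_h_at_sound 61); [exact Hn|]. apply H12, in_seq. lia.
  - destruct (le_lt_dec S2 s) as [HL|HL].
    + eapply Rle_trans; [exact (h_Jsym_le_simple s _ Hs Hp)|].
      pose proof (Hsimple S2 s ltac:(lia)). lra.
    + apply (check_h_at_sound 61); [exact Hn|]. apply Hsym, in_seq. lia.
Qed.

Lemma CJ_inv_nat_table n : (2 <= n <= 10)%nat ->
  Rbar_le (CJ J12 (1 / INR n)) (Finite (cval n)) /\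
  Rbar_le (CJ Jsym (1 / INR n)) (Finite (dval n)).
Proof.
  intros Hn.
  destruct n as [|[|[|[|[|[|[|[|[|[|[|n]]]]]]]]]]]; try lia;
    [ apply (CJ_inv_nat_le 2 21327 10570 16 18)
    | apply (CJ_inv_nat_le 3 16582 8168 19 23)
    | apply (CJ_inv_nat_le 4 15043 7387 24 28)
    | apply (CJ_inv_nat_le 5 14293 7001 28 34)
    | apply (CJ_inv_nat_le 6 13851 6773 33 39)
    | apply (CJ_inv_nat_le 7 13560 6622 37 45)
    | apply (CJ_inv_nat_le 8 13354 6515 42 50)
    | apply (CJ_inv_nat_le 9 13202 6436 47 56)
    | apply (CJ_inv_nat_le 10 13085 6374 51 62) ];
    first [ lia | vm_compute; reflexivity | rewrite !INR_IZR_INZ; simpl Z.of_nat; lra ].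
Qed.

Theorem lemma2 :
  (forall p : R, 0 < p < 1 ->
     Rbar_lt (CJ J12 p) (Finite (12183/10000 + 16066/10000 * (p / (1 - p))))) /\
  (forall p : R, 0 < p < 1 ->
     Rbar_lt (CJ Jsym p)
       (Finite (5893/10000 + 9724/10000 * (p / (1 - p))
                + 1405/10000 * (p ^ 2 / (1 - p ^ 2) ^ 2)))) /\
  (forall n : nat, (2 <= n <= 10)%nat ->
     Rbar_le (CJ J12 (1 / INR n)) (Finite (cval n)) /\
     Rbar_le (CJ Jsym (1 / INR n)) (Finite (dval n))).
Proof.
  split; [|split].
  - intros p Hp. eapply Rbar_le_lt_trans.
    + apply CJ_le_of_forall. intros s Hs. exact (h_J12_le_affine s p Hs Hp).
    + cbn [Rbar_lt]. lra.
  - intros p Hp. eapply Rbar_le_lt_trans.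
    + apply CJ_le_of_forall. intros s Hs. exact (h_Jsym_le_affine s p Hs Hp).
    + assert (0 <= p ^ 2 / (1 - p ^ 2) ^ 2)
        by (apply Rdiv_le_0_compat; [apply pow2_ge_0 | apply pow_lt; simpl; nra]).
      cbn [Rbar_lt]. lra.
  - exact CJ_inv_nat_table.
Qed.
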